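(* Let $\tilde L$ be a minimum-size counterexample. Then the least element $0_{\tilde L}$ is meet-reducible in $\tilde L$, i.e. it is lower covered by (has) at least two atoms.
   Context: For a poset $P$, $x$ upper covers $y$ if $y<x$ with nothing strictly between. Join-irreducible: upper covers exactly one element; meet-reducible: lower covers more than one element; an atom is an element upper covering the least element. For $x\in P$, ${\uparrow}x=\{y: x\le y\}$. A counterexample is a finite lattice $L$ with $|L|>1$ in which every join-irreducible $j$ satisfies $|{\uparrow}j|>|L|/2$; a minimum-size counterexample is a counterexample $\tilde L$ such that no counterexample has fewer elements. *)

From HB Require Import structures.
From mathcomp Require Import all_boot all_order.
Set Implicit Arguments. Unset Strict Implicit. Unset Printing Implicit Defensive.
Import Order.TTheory.
Local Open Scope order_scope.

Definition covers (d : Order.disp_t) (L : finTBLatticeType d) (x y : L) : bool :=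
  (y < x) && [forall z : L, ~~ ((y < z) && (z < x))].

Definition join_irreducible (d : Order.disp_t) (L : finTBLatticeType d) (j : L) : bool :=
  #|[set y : L | covers j y]| == 1%N.

Definition meet_reducible (d : Order.disp_t) (L : finTBLatticeType d) (x : L) : bool :=
  (1 < #|[set y : L | covers y x]|)%N.

Definition up_set (d : Order.disp_t) (L : finTBLatticeType d) (x : L) : {set L} :=
  [set y : L | x <= y].

Definition counterexample (d : Order.disp_t) (L : finTBLatticeType d) : Prop :=
  (1 < #|L|)%N /\
  forall j : L, join_irreducible j -> (#|L| < 2 * #|up_set j|)%N.

Definition min_counterexample (d : Order.disp_t) (L : finTBLatticeType d) : Prop :=
  counterexample L /\
  forall (d' : Order.disp_t) (L' : finTBLatticeType d'),
    counterexample L' -> (#|L| <= #|L'|)%N.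

From HB Require Import structures.
From mathcomp Require Import all_boot all_order zify.
Set Implicit Arguments. Unset Strict Implicit. Unset Printing Implicit Defensive.
Import Order.TTheory.
Local Open Scope order_scope.

(* If the bottom of L had a unique atom a, every nonzero element would lie
   above a.  Being an atom, a is join-irreducible, so |L| < 2 |up a| = 2 (|L| - 1).
   The interval [a, 1] then has |L| - 1 elements, and its join-irreducibles are
   exactly the join-irreducibles of L other than a, with the same up-sets; so it
   is a strictly smaller counterexample. *)

Section UpLattice.
Variables (d : Order.disp_t) (L : finTBLatticeType d) (a : L).

Definition up_lattice := {x : L | a <= x}.
HB.instance Definition _ := SubFinite.on up_lattice.

Lemma meet_closed_ge : meet_closed (fun x : L => a <= x).
Proof. by move=> x y; rewrite !unfold_in => ax ay; rewrite lexI ax. Qed.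

Lemma join_closed_ge : join_closed (fun x : L => a <= x).
Proof. by move=> x y; rewrite !unfold_in => ax _; rewrite lexUl. Qed.

HB.instance Definition _ :=
  Order.SubChoice_isSubLattice.Build d L (fun x : L => a <= x) (Order.Disp tt tt)
    up_lattice meet_closed_ge join_closed_ge.

Definition up_bot : up_lattice := exist _ a (lexx a).
Definition up_top : up_lattice := exist _ \top (lex1 a).

Lemma up_bot_le (x : up_lattice) : up_bot <= x. Proof. exact: valP. Qed.
Lemma up_le_top (x : up_lattice) : x <= up_top. Proof. exact: lex1. Qed.

HB.instance Definition _ := Order.hasBottom.Build _ up_lattice up_bot_le.
HB.instance Definition _ := Order.hasTop.Build _ up_lattice up_le_top.

Lemma covers_up (u v : up_lattice) : covers u v = covers (val u) (val v).
Proof.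
rewrite /covers -lt_val; case: (val v < val u) => //=.
apply/forallP/forallP => [between_up z | between z]; last by rewrite -!lt_val.
apply/negP => /andP[vz zu].
have az : a <= z := le_trans (valP v) (ltW vz).
by move: (between_up (exist _ z az)); rewrite -!lt_val /= vz zu.
Qed.

Lemma card_up_lattice : #|{: up_lattice}| = #|up_set a|.
Proof. by rewrite card_sig; apply: eq_card => x; rewrite !inE. Qed.

Lemma card_up_set_up (j : up_lattice) : #|up_set j| = #|up_set (val j)|.
Proof.
suff -> : up_set (val j) = val @: up_set j by rewrite card_imset //; apply: val_inj.
apply/setP => y; rewrite inE; apply/idP/imsetP => [jy | [z + ->]].
  by exists (exist _ y (le_trans (valP j) jy)); rewrite ?inE.
by rewrite inE.
Qed.
End UpLattice.

Section Atoms.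
Variables (d : Order.disp_t) (L : finTBLatticeType d).

Lemma bot_not_join_irreducible : ~~ join_irreducible (\bot : L).
Proof.
rewrite /join_irreducible; apply/negP => /cards1P[y /setP/(_ y)].
by rewrite !inE /covers ltx0 eqxx.
Qed.

Lemma atom_join_irreducible (a : L) : covers a \bot -> join_irreducible a.
Proof.
move=> a_atom; apply/cards1P; exists \bot; apply/setP => y; rewrite !inE.
apply/idP/eqP => [/andP[ya _] | ->]; last exact: a_atom.
apply/eqP/negPn; rewrite -lt0x; apply/negP => bot_y.
by move/andP: a_atom => [_ /forallP/(_ y)]; rewrite bot_y ya.
Qed.

(* An element above \bot with the fewest strict lower bounds is an atom. *)
Lemma atom_below (x : L) : \bot < x -> exists2 z : L, covers z \bot & z <= x.
Proof.
move=> bx; pose P z := (\bot < z) && (z <= x).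
have Px : P x by rewrite /P bx lexx.
have [z /andP[bz zx] z_min] := arg_minnP (fun z => #|[set w : L | w < z]|) Px.
exists z => //; rewrite /covers bz; apply/forallP => w; apply/negP => /andP[bw wz].
have Pw : P w by rewrite /P bw (le_trans (ltW wz) zx).
apply/negP: (z_min w Pw); rewrite -ltnNge; apply: proper_card; apply/properP; split.
  by apply/subsetP => u; rewrite !inE => /lt_trans; apply.
by exists w; rewrite !inE ?wz ?ltxx.
Qed.

Lemma exists_atom : (1 < #|L|)%N -> exists a : L, covers a \bot.
Proof.
move=> L_gt1; have : (0 < #|[set~ (\bot : L)]|)%N by rewrite cardsC1 -subn1 subn_gt0.
case/card_gt0P => x; rewrite !inE -lt0x.
by case/atom_below => a a_atom _; exists a.
Qed.

Lemma unique_atom_le (a : L) :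
  ~~ meet_reducible (\bot : L) -> covers a \bot -> forall x, x != \bot -> a <= x.
Proof.
rewrite /meet_reducible -leqNgt => /card_le1_eqP atoms_eq a_atom x.
rewrite -lt0x => xb.
have [z z_atom zx] := atom_below xb.
by have -> : a = z by apply: atoms_eq; rewrite inE.
Qed.
End Atoms.

Section UniqueAtom.
Variables (d : Order.disp_t) (L : finTBLatticeType d) (a : L).
Hypotheses (a_atom : covers a \bot) (a_le : forall x : L, x != \bot -> a <= x).

Lemma atom_neq0 : a != \bot.
Proof. by rewrite -lt0x; case/andP: a_atom. Qed.

Lemma covers_bot_eq (x : L) : covers x \bot -> x = a.
Proof.
move=> /andP[bx /forallP no_between]; apply/esym/eqP.
have /a_le : x != \bot by rewrite -lt0x.
rewrite le_eqVlt => /orP[// | ax].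
by move: (no_between a); rewrite ax andbT; case/andP: a_atom => ->.
Qed.

Lemma up_set_atom : up_set a = [set~ \bot].
Proof.
apply/setP => y; rewrite !inE; apply/idP/idP => [ay | /a_le //].
by apply: contraTneq ay => ->; rewrite lex0 atom_neq0.
Qed.

Lemma card_up_set_atom : #|up_set a| = #|L|.-1.
Proof. by rewrite up_set_atom cardsC1. Qed.

Lemma join_irreducible_up (j : up_lattice a) :
  val j != a -> join_irreducible j = join_irreducible (val j).
Proof.
move=> ja; rewrite /join_irreducible.
suff -> : [set y : L | covers (val j) y] = val @: [set y | covers j y].
  by rewrite card_imset //; apply: val_inj.
apply/setP => y; rewrite inE; apply/idP/imsetP => [jy | [z + ->]]; last first.
  by rewrite inE covers_up.
have ay : a <= y.
  have [yb | /a_le //] := eqVneq y \bot.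
  by move: ja; rewrite yb in jy; rewrite (covers_bot_eq jy) eqxx.
by exists (exist _ y ay); rewrite // inE covers_up.
Qed.

Lemma counterexample_up : counterexample L -> counterexample (up_lattice a).
Proof.
move=> [L_gt1 ji_big].
have := ji_big a (atom_join_irreducible a_atom); rewrite card_up_set_atom => L_gt2.
split; first by rewrite card_up_lattice card_up_set_atom; lia.
move=> j jj; rewrite card_up_lattice card_up_set_atom card_up_set_up.
have ja : val j != a.
  apply: contraNneq (bot_not_join_irreducible (up_lattice a)) => j_eq_a.
  by rewrite (_ : \bot = j) //; apply: val_inj.
by rewrite join_irreducible_up // in jj; have := ji_big _ jj; lia.
Qed.
End UniqueAtom.

Theorem corollary2p2 (d : Order.disp_t) (L : finTBLatticeType d) :
  min_counterexample L -> meet_reducible (\bot : L).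
Proof.
move=> [[L_gt1 ji_big] L_min]; apply: contraT => bot_irred.
have [a a_atom] := exists_atom L_gt1.
have a_le := unique_atom_le bot_irred a_atom.
have := L_min _ _ (counterexample_up a_atom a_le (conj L_gt1 ji_big)).
rewrite card_up_lattice (card_up_set_atom a_atom a_le); lia.
Qed.
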